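(* Let $K'\subset K\subset\mathbb{R}^n$, $\delta>0$, $\sigma>0$, and let $\nu_1,\dots,\nu_M\in K'$ be a maximal $\delta$-packing of $K'$ (i.e. $\|\nu_i-\nu_j\|\ge\delta$ for $i\ne j$ and no further point of $K'$ can be added). Suppose $\mu\in K'$ and $Y=\mu+\xi$ with $\xi\sim N(0,\sigma^2\mathbb{I}_n)$, and let $i^*\in\arg\min_i\|Y-\nu_i\|$. Then for any fixed $C>2$, $$\mathbb{P}(\|\nu_{i^*}-\mu\|>(C+1)\delta)\le M\exp\big(-(C-2)^2\delta^2/(8\sigma^2)\big).$$
   Context: $\|\cdot\|$ is the Euclidean norm. *)

From HB Require Import structures.
From mathcomp Require Import all_boot all_order all_algebra.
From mathcomp Require Import all_classical all_reals all_analysis.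
Set Implicit Arguments. Unset Strict Implicit. Unset Printing Implicit Defensive.
Import Order.TTheory GRing.Theory Num.Theory.
Local Open Scope classical_set_scope.
Local Open Scope ring_scope.

(* Euclidean norm on R^n, represented as row vectors 'rV[R]_n.
   (The library's `|v| on matrices is the sup norm, so we define it.) *)
Definition enorm {R : realType} {n : nat} (v : 'rV[R]_n) : R :=
  Num.sqrt (\sum_(i < n) v ord0 i ^+ 2).

Definition is_packing {R : realType} {n M : nat} (K' : set 'rV[R]_n)
  (delta : R) (nu : 'I_M -> 'rV[R]_n) : Prop :=
  (forall i, K' (nu i)) /\
  (forall i j, i != j -> delta <= enorm (nu i - nu j)).

Definition is_maximal_packing {R : realType} {n M : nat} (K' : set 'rV[R]_n)
  (delta : R) (nu : 'I_M -> 'rV[R]_n) : Prop :=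
  is_packing K' delta nu /\
  (forall x, K' x -> exists i, enorm (x - nu i) < delta).

(* xi : T -> R^n has law N(0, sigma^2 I_n): its coordinates are measurable
   and jointly distributed as independent N(0, sigma^2) variables, i.e. the
   law of xi agrees with the product Gaussian measure on all measurable
   rectangles (which determines the law). *)
Definition is_std_gaussian_vector {R : realType} {d : measure_display}
  {T : measurableType d} (P : probability T R) (n : nat) (sigma : R)
  (xi : T -> 'rV[R]_n) : Prop :=
  (forall i : 'I_n, measurable_fun setT (fun w => xi w ord0 i)) /\
  (forall B : 'I_n -> set R, (forall i, measurable (B i)) ->
     P [set w | forall i, B i (xi w ord0 i)] =
     (\prod_(i < n) normal_prob 0 sigma (B i))%E).

From HB Require Import structures.
From mathcomp Require Import all_boot all_order all_algebra.
From mathcomp Require Import all_classical all_reals all_analysis.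
From mathcomp Require Import measurable_realfun ring lra.

Import Order.TTheory GRing.Theory Num.Theory.
Local Open Scope classical_set_scope.
Local Open Scope ring_scope.

(* By maximality some packing point [nu i0] lies within [delta] of [mu]. If the
   point [nu i] nearest to [Y] is far from [mu], then [Y] is at least as close
   to [nu i] as to [nu i0], i.e. the Gaussian variable [<nu i - nu i0, xi>]
   exceeds [(|nu i - mu|^2 - |nu i0 - mu|^2) / 2]. Its moment generating
   function is computed coordinatewise from the product form of the law of
   [xi], so a Chernoff bound together with
   [|nu i - mu| - |nu i0 - mu| <= |nu i - nu i0| <= |nu i - mu| + |nu i0 - mu|]
   bounds this probability by [exp (-(C - 2)^2 delta^2 / (8 sigma^2))]; a union
   bound over the [M] packing points concludes. *)

Section finite_measure_facts.
Context {d} {T : measurableType d} {R : realType}.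

Lemma measurable_ler_set (f g : T -> R) :
  measurable_fun setT f -> measurable_fun setT g -> measurable [set w | f w <= g w].
Proof.
have mtrue : measurable [set true] by [].
move=> mf mg; have := measurable_fun_ler mf mg measurableT mtrue.
by rewrite setTI.
Qed.

Lemma measurable_minimizer_set (I : finType) (f : I -> T -> R) (S : pred I) :
  (forall i, measurable_fun setT (f i)) ->
  measurable [set w | exists i, (forall j, f i w <= f j w) /\ S i].
Proof.
move=> mf.
have -> : [set w | exists i, (forall j, f i w <= f j w) /\ S i] =
    \bigcup_(i in [set i | S i]) \bigcap_(j in setT) [set w | f i w <= f j w].
  apply/seteqP; split => w /=.
  - by move=> [i [fi Si]]; exists i => // j _; exact: fi.
  - by move=> [i Si fi]; exists i; split => // j; exact: fi.
apply: fin_bigcup_measurable; first exact: finite_finset.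
move=> i _; apply: fin_bigcap_measurable; first exact: finite_finset.
by move=> j _; exact: measurable_ler_set.
Qed.

Local Open Scope ereal_scope.

Lemma le_measure_fin_cover (mu : {measure set T -> \bar R}) {I : finType}
    {A : set T} {F : I -> set T} :
  measurable A -> (forall i, measurable (F i)) -> A `<=` \bigcup_i F i ->
  mu A <= \sum_i mu (F i).
Proof.
move=> mA mF AF.
have := @content_sub_fsum _ _ _ mu _ [set: I] _ _ finite_finset (fun i _ => mF i) mA AF.
rewrite (fsbigE (index_enum I)) ?index_enum_uniq //; last first.
  by move=> i _; rewrite mem_index_enum.
move=> /le_trans; apply; rewrite (eq_bigl xpredT) // => i; exact: in_setT.
Qed.

End finite_measure_facts.

Section weighted_pushforward.
Local Open Scope ereal_scope.
Context {R : realType} {d} {T : measurableType d} {d'} {U : measurableType d'}.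
Variables (mu : {measure set T -> \bar R}) (nu : {measure set U -> \bar R}).
Variables (X : T -> U) (G : T -> R) (c : \bar R).
Hypotheses (mX : measurable_fun setT X) (mG : measurable_fun setT G)
  (G_ge0 : forall w, (0 <= G w)%R) (c_fin : c \is a fin_num).
Hypothesis integral_indic_weighted : forall B, measurable B ->
  \int[mu]_w (\1_B (X w) * G w)%:E = c * nu B.

Import HBNNSimple.

Let integral_nnsfun_weighted (f : {nnsfun U >-> R}) :
  \int[mu]_w (f (X w) * G w)%:E = c * \int[nu]_x (f x)%:E.
Proof.
rewrite integral_nnsfun// patch_setT sintegralE.
transitivity (\int[mu]_w
    (\sum_(y \in range f) (y * (\1_(f @^-1` [set y]) (X w) * G w))%:E)).
  apply: eq_integral => w _; rewrite fsumEFin // fimfunE; congr EFin.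
  rewrite fsbig_finite //= fsbig_finite //= big_distrl /=.
  by apply: eq_bigr => y _; rewrite mulrA.
rewrite ge0_integral_fsum //; last first.
- move=> y w _; rewrite mulrA lee_fin mulr_ge0 //.
  by rewrite -lee_fin EFinM nnfun_muleindic_ge0.
- move=> y; apply/measurable_EFinP; apply: measurable_funM => //.
  by apply: measurable_funM => //; exact: measurableT_comp.
rewrite ge0_mule_fsumr; last by move=> y; exact: nnsfun_mulemu_ge0.
apply: eq_fsbigr => y /[!inE] -[t _ <-] {y}.
under eq_integral do rewrite mulrA -mulrA EFinM.
rewrite ge0_integralZl_EFin //.
- by rewrite integral_indic_weighted 1?muleCA //; exact: measurable_sfunP.
- by move=> w _; rewrite lee_fin mulr_ge0.
- apply/measurable_EFinP; apply: measurable_funM => //.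
  by apply: measurableT_comp => //; apply: measurable_indic; exact: measurable_sfunP.
Qed.

Lemma ge0_integral_weighted (g : U -> R) :
  measurable_fun setT g -> (forall x, (0 <= g x)%R) ->
  \int[mu]_w (g (X w) * G w)%:E = c * \int[nu]_x (g x)%:E.
Proof.
move=> mg g_ge0; have mEg : measurable_fun setT (EFin \o g) by exact/measurable_EFinP.
pose h := nnsfun_approx measurableT mEg.
have h_cvg x : (fun k => (h k x)%:E) @ \oo --> (g x)%:E.
  by apply: (cvg_nnsfun_approx measurableT) => // y _; rewrite lee_fin.
have h_nd x : {homo (fun k => h k x) : a b / (a <= b)%N >-> (a <= b)%R}.
  by move=> a b ab; exact/lefP/nd_nnsfun_approx.
have h_int_nd : nondecreasing_seq (fun k => \int[nu]_x (h k x)%:E).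
  move=> a b ab; apply: ge0_le_integral => //.
  - by move=> x _; rewrite lee_fin.
  - exact/measurable_EFinP.
  - exact/measurable_EFinP.
  - by move=> x _; rewrite lee_fin; exact: h_nd.
transitivity (\int[mu]_w limn (fun k => (h k (X w) * G w)%:E)).
  apply: eq_integral => w _; apply/esym/cvg_lim => //.
  rewrite EFinM; under eq_fun do rewrite EFinM.
  exact: cvgeZr (h_cvg _).
rewrite monotone_convergence //; last 3 first.
- move=> k; apply/measurable_EFinP; apply: measurable_funM => //.
  exact: measurableT_comp.
- by move=> k w _; rewrite lee_fin mulr_ge0.
- by move=> w _ a b ab; rewrite lee_fin ler_wpM2r // h_nd.
under eq_fun do rewrite integral_nnsfun_weighted.
rewrite limeMl //; last exact: ereal_nondecreasing_is_cvgn.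
congr (_ * _); rewrite -monotone_convergence //.
- by apply: eq_integral => x _; apply: cvg_lim => //; exact: h_cvg.
- by move=> k; apply/measurable_EFinP.
- by move=> k x _; rewrite lee_fin.
- by move=> x _ a b ab; rewrite lee_fin; exact: h_nd.
Qed.

End weighted_pushforward.

Section normal_mgf.
Local Open Scope ereal_scope.
Context {R : realType}.

Lemma ge0_integral_normal_prob (m s : R) (g : R -> R) :
  measurable_fun setT g -> (forall x, (0 <= g x)%R) ->
  \int[normal_prob m s]_x (g x)%:E =
  \int[lebesgue_measure]_x (g x * normal_pdf m s x)%:E.
Proof.
move=> mg g_ge0; rewrite -[LHS]mul1e; apply/esym.
apply: (ge0_integral_weighted lebesgue_measure (normal_prob m s) id) => //.
- exact: measurable_normal_pdf.
- exact: normal_pdf_ge0.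
- move=> B mB; rewrite mul1e /normal_prob [RHS]integral_mkcond epatch_indic.
  by apply: eq_integral => x _; rewrite /= EFinM muleC.
Qed.

(* Completing the square in the exponent. *)
Lemma expR_mul_normal_fun (s a x : R) : s != 0%R ->
  (expR (a * x) * normal_fun 0 s x =
   expR (a ^+ 2 * s ^+ 2 / 2) * normal_fun (a * s ^+ 2) s x)%R.
Proof.
by move=> s0; rewrite /normal_fun -!expRD; congr expR; field.
Qed.

Lemma normal_mgf (s a : R) : s != 0%R ->
  \int[normal_prob 0 s]_x (expR (a * x))%:E = (expR (a ^+ 2 * s ^+ 2 / 2))%:E.
Proof.
move=> s0; rewrite ge0_integral_normal_prob //; last first.
  by apply: measurableT_comp; [exact: measurable_expR | exact: measurable_funM].
transitivity (\int[lebesgue_measure]_x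
    ((expR (a ^+ 2 * s ^+ 2 / 2))%:E * (normal_pdf (a * s ^+ 2) s x)%:E)).
  apply: eq_integral => x _; rewrite -EFinM !normal_pdfE //=.
  by rewrite mulrCA expR_mul_normal_fun // mulrCA.
rewrite ge0_integralZl_EFin //.
- by rewrite integral_normal_pdf mule1.
- by move=> x _; rewrite lee_fin normal_pdf_ge0.
- by apply/measurable_EFinP; exact: measurable_normal_pdf.
Qed.

End normal_mgf.

Section euclidean.
Context {R : realType} {n : nat}.
Implicit Types a b c p q x : 'rV[R]_n.

Definition dotr p q := \sum_k p ord0 k * q ord0 k.

Lemma dotrBl p q x : dotr (p - q) x = dotr p x - dotr q x.
Proof. by rewrite /dotr -sumrB; apply: eq_bigr => k _; rewrite !mxE mulrBl. Qed.

Lemma sqr_enorm p : enorm p ^+ 2 = dotr p p.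
Proof.
rewrite sqr_sqrtr; last by apply: sumr_ge0 => k _; exact: sqr_ge0.
by apply: eq_bigr => k _; rewrite expr2.
Qed.

Lemma enorm_ge0 p : 0 <= enorm p.
Proof. exact: sqrtr_ge0. Qed.

Lemma enormN p : enorm (- p) = enorm p.
Proof. by congr Num.sqrt; apply: eq_bigr => k _; rewrite mxE sqrrN. Qed.

Lemma sqr_enormD p q :
  enorm (p + q) ^+ 2 = enorm p ^+ 2 + 2 * dotr p q + enorm q ^+ 2.
Proof.
rewrite !sqr_enorm /dotr mulr_sumr -!big_split /=.
by apply: eq_bigr => k _; rewrite mxE; ring.
Qed.

(* Lagrange's identity: [2 (|p|^2 |q|^2 - <p,q>^2)] is a sum of squares. *)
Lemma sqr_dotr_le p q : dotr p q ^+ 2 <= enorm p ^+ 2 * enorm q ^+ 2.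
Proof.
rewrite !sqr_enorm; pose a k := p ord0 k; pose b k := q ord0 k.
have e1 : dotr p p * dotr q q = \sum_i \sum_j a i * a i * (b j * b j).
  by rewrite mulr_suml; apply: eq_bigr => i _; rewrite mulr_sumr.
have e2 : dotr p p * dotr q q = \sum_i \sum_j a j * a j * (b i * b i).
  rewrite mulrC mulr_suml; apply: eq_bigr => i _; rewrite mulr_sumr.
  by apply: eq_bigr => j _; rewrite mulrC.
have e3 : dotr p q ^+ 2 = \sum_i \sum_j a i * b i * (a j * b j).
  by rewrite expr2 mulr_suml; apply: eq_bigr => i _; rewrite mulr_sumr.
have lagrange : \sum_i \sum_j (a i * b j - a j * b i) ^+ 2 =
    2 * (dotr p p * dotr q q - dotr p q ^+ 2).
  rewrite mulrBr mulr_natl mulr2n {1}e1 e2 e3 -big_split /= mulr_sumr -sumrB.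
  apply: eq_bigr => i _; rewrite -big_split /= mulr_sumr -sumrB.
  by apply: eq_bigr => j _; ring.
have : 0 <= \sum_i \sum_j (a i * b j - a j * b i) ^+ 2.
  by apply: sumr_ge0 => i _; apply: sumr_ge0 => j _; exact: sqr_ge0.
by rewrite lagrange pmulr_rge0 // subr_ge0.
Qed.

Lemma ler_dotr p q : dotr p q <= enorm p * enorm q.
Proof.
have := sqr_dotr_le p q; rewrite -exprMn.
have := mulr_ge0 (enorm_ge0 p) (enorm_ge0 q); nra.
Qed.

Lemma ler_enormB p q : enorm (p - q) <= enorm p + enorm q.
Proof.
have pq := ler_dotr p (- q); rewrite enormN in pq.
rewrite -(ler_pXn2r (_ : 0 < 2)%N) ?nnegrE ?addr_ge0 ?enorm_ge0 //.
rewrite sqr_enormD enormN sqrrD; lra.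
Qed.

Lemma closer_dotr_ge c a b x :
  enorm (c + x - a) <= enorm (c + x - b) ->
  (enorm (a - c) ^+ 2 - enorm (b - c) ^+ 2) / 2 <= dotr (a - b) x.
Proof.
have shift e : c + x - e = (c - e) + x by rewrite addrAC.
have flip e : enorm (e - c) = enorm (c - e) by rewrite -enormN opprB.
rewrite !flip -(ler_pXn2r (_ : 0 < 2)%N) ?nnegrE ?enorm_ge0 // !shift.
rewrite (sqr_enormD (c - a)) (sqr_enormD (c - b)).
have -> : a - b = (c - b) - (c - a) by rewrite opprB [RHS]addrC addrA subrK.
rewrite (dotrBl (c - b) (c - a)); lra.
Qed.

End euclidean.

Lemma ler_far_exponent {R : realType} (A B V r s : R) :
  s != 0 -> 0 < r <= A - B -> 0 <= B -> 0 < V <= A + B ->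
  r ^+ 2 / (8 * s ^+ 2) <= ((A ^+ 2 - B ^+ 2) / 2) ^+ 2 / (2 * (s ^+ 2 * V ^+ 2)).
Proof.
move=> s_neq0 /andP[r_gt0 r_le] B_ge0 /andP[V_gt0 V_le].
have s2_gt0 : 0 < s ^+ 2 by rewrite exprn_even_gt0 //= s_neq0.
have AB : A ^+ 2 - B ^+ 2 = (A - B) * (A + B) by ring.
have key : r ^+ 2 * V ^+ 2 <= (A ^+ 2 - B ^+ 2) ^+ 2.
  rewrite AB exprMn; apply: ler_pM; rewrite ?sqr_ge0 // ler_sqr ?nnegrE //; lra.
have -> : r ^+ 2 / (8 * s ^+ 2) = r ^+ 2 * V ^+ 2 / (8 * (s ^+ 2 * V ^+ 2)).
  by field; rewrite s_neq0 gt_eqF.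
have -> : ((A ^+ 2 - B ^+ 2) / 2) ^+ 2 / (2 * (s ^+ 2 * V ^+ 2)) =
    (A ^+ 2 - B ^+ 2) ^+ 2 / (8 * (s ^+ 2 * V ^+ 2)).
  by field; rewrite s_neq0 gt_eqF.
have V2_gt0 : 0 < V ^+ 2 by rewrite exprn_gt0.
by rewrite ler_pM2r // invr_gt0 mulr_gt0 // mulr_gt0.
Qed.

Section gaussian_vector.
Local Open Scope ereal_scope.
Context {R : realType} {d} {T : measurableType d} {P : probability T R} {n : nat}
  {s : R} {xi : T -> 'rV[R]_n}.
Hypotheses (xi_gauss : is_std_gaussian_vector P s xi) (s_neq0 : s != 0%R).
Local Notation X i w := (xi w ord0 i).
Local Notation N := (normal_prob 0 s).

Let measurable_coord i : measurable_fun setT (fun w => X i w).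
Proof. exact: xi_gauss.1. Qed.

Lemma measurable_dotr (v : 'rV[R]_n) : measurable_fun setT (fun w => dotr v (xi w)).
Proof. by apply: measurable_sum => i; exact: measurable_funM. Qed.

Lemma measurable_enorm_shift (c a : 'rV[R]_n) :
  measurable_fun setT (fun w => enorm (c + xi w - a)).
Proof.
apply: measurableT_comp; first by apply: continuous_measurable_fun; exact: sqrt_continuous.
apply: measurable_sum => i; apply: measurable_funX.
by under eq_fun do rewrite !mxE; apply: measurable_funB => //; exact: measurable_funD.
Qed.

Let prod_indic_coord (B : 'I_n -> set R) w :
  (\prod_i \1_(B i) (X i w) = \1_[set w | forall i, B i (X i w)] w :> R)%R.
Proof.
have [inB|] := pselect (forall i, B i (X i w)).
  by rewrite [RHS]indicE mem_set //; apply: big1 => i _; rewrite indicE mem_set.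
move=> /existsNP[i notBi].
by rewrite [RHS]indicE memNset // (bigD1 i) //= indicE memNset // mul0r.
Qed.

Let measurable_coord_rectangle (B : 'I_n -> set R) :
  (forall i, measurable (B i)) -> measurable [set w | forall i, B i (X i w)].
Proof.
move=> mB; have -> : [set w | forall i, B i (X i w)] =
    \bigcap_(i in setT) ((fun w => X i w) @^-1` B i).
  by apply/seteqP; split => w /= wB i; [move=> _ | ]; exact: wB.
apply: fin_bigcap_measurable => // i _.
by rewrite -[S in measurable S]setTI; exact: measurable_coord.
Qed.

Section independence.
Variable g : 'I_n -> R -> R.
Hypotheses (mg : forall i, measurable_fun setT (g i))
  (g_ge0 : forall i x, (0 <= g i x)%R) (g_fin : forall i, \int[N]_x (g i x)%:E < +oo).

(* The law of [xi] is only known on rectangles ([k = 0]); the induction on [k]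
   replaces the indicators of the coordinates [i < k] by [g i], one at a time. *)
Let mixed k (B : 'I_n -> set R) (i : 'I_n) : R -> R := if (i < k)%N then g i else \1_(B i).

Let mixed_ge0 k B i x : (0 <= mixed k B i x)%R.
Proof. by rewrite /mixed; case: ifP. Qed.

Let measurable_mixed k B i : measurable (B i) -> measurable_fun setT (mixed k B i).
Proof. by move=> mB; rewrite /mixed; case: ifP => _ //; exact: measurable_indic. Qed.

Let integral_mixed_fin k B i : measurable (B i) ->
  \int[N]_x (mixed k B i x)%:E \is a fin_num.
Proof.
move=> mB; rewrite /mixed; case: ifP => _.
  by rewrite ge0_fin_numE ?g_fin // integral_ge0 // => x _; rewrite lee_fin.
by rewrite integral_indic // setIT fin_num_measure.
Qed.

Let integral_prod_mixed k : (k <= n)%N -> forall B : 'I_n -> set R,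
  (forall i, measurable (B i)) ->
  \int[P]_w (\prod_i mixed k B i (X i w))%:E = \prod_i \int[N]_x (mixed k B i x)%:E.
Proof.
elim: k => [|k IH] kn B mB.
  under eq_integral do rewrite prod_indic_coord.
  rewrite integral_indic ?setIT //; last exact: measurable_coord_rectangle.
  rewrite -[LHS]/(P _) (xi_gauss.2 B mB); apply: eq_bigr => i _.
  by rewrite /mixed ltn0 integral_indic ?setIT //; exact: mB.
pose kk := Ordinal kn.
pose Bk B' j := if j == kk then B' else B j.
have mixedE B' i : i != kk -> mixed k (Bk B') i = mixed k.+1 B i.
  move=> ik; rewrite /mixed /Bk (negbTE ik) ltnS (leq_eqVlt i k).
  by case: eqP => // ik'; case/negP: ik; apply/eqP/val_inj.
have mixed_kk : mixed k.+1 B kk = g kk by rewrite /mixed ltnSn.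
rewrite (bigD1 kk) //= mixed_kk muleC.
under eq_integral do rewrite (bigD1 kk) //= mixed_kk.
(* Integrate coordinate [k] against the weight formed by the other
   coordinates; on indicators of coordinate [k] this is the induction
   hypothesis. *)
apply: (ge0_integral_weighted P N (fun w => X kk w)) => //.
- exact: measurable_coord.
- under eq_fun do rewrite big_mkcond.
  apply: measurable_prod => i _; case: (i != kk) => //.
  by apply: measurableT_comp; [exact: measurable_mixed | exact: measurable_coord].
- by move=> w; apply: prodr_ge0 => i _; exact: mixed_ge0.
- by apply: prode_fin_num => i _; exact: integral_mixed_fin.
- move=> B' mB'.
  have mBk i : measurable (Bk B' i) by rewrite /Bk; case: (i == kk).
  transitivity (\int[P]_w (\prod_i mixed k (Bk B') i (X i w))%:E).
    apply: eq_integral => w _; rewrite [in RHS](bigD1 kk) //=.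
    congr (_ * _)%:E; first by rewrite /mixed /Bk eqxx /= ltnn.
    by apply: eq_bigr => i ik; rewrite mixedE.
  rewrite IH ?(ltnW kn) // (bigD1 kk) //= muleC; congr (_ * _).
    by apply: eq_bigr => i ik; rewrite mixedE.
  by rewrite /mixed /Bk eqxx /= ltnn integral_indic ?setIT //.
- exact: mg.
Qed.

Lemma integral_prod_coord :
  \int[P]_w (\prod_i g i (X i w))%:E = \prod_i \int[N]_x (g i x)%:E.
Proof.
have := @integral_prod_mixed n (leqnn n) (fun=> setT) (fun=> measurableT).
by rewrite /mixed; under eq_integral do under eq_bigr do rewrite ltn_ord;
   under eq_bigr do rewrite ltn_ord.
Qed.

End independence.

Lemma gauss_dotr_mgf (v : 'rV[R]_n) (lam : R) :
  \int[P]_w (expR (lam * dotr v (xi w)))%:E =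
  (expR (lam ^+ 2 * s ^+ 2 * enorm v ^+ 2 / 2))%:E.
Proof.
under eq_integral do rewrite /dotr mulr_sumr expR_sum.
under eq_integral do under eq_bigr do rewrite mulrA.
rewrite (integral_prod_coord (fun i x => expR (lam * v ord0 i * x))); first last.
- by move=> i; rewrite normal_mgf // ltry.
- by move=> i x; exact: expR_ge0.
- by move=> i; apply: measurableT_comp => //; exact: measurable_funM.
under eq_bigr do rewrite normal_mgf //.
rewrite prodEFin -expR_sum sqr_enorm /dotr mulr_sumr mulr_suml.
by congr (expR _)%:E; apply: eq_bigr => i _; ring.
Qed.


Lemma gauss_dotr_tail (v : 'rV[R]_n) (t : R) : (0 < enorm v)%R -> (0 <= t)%R ->
  P [set w | t <= dotr v (xi w)]%R <=
  (expR (- t ^+ 2 / (2 * (s ^+ 2 * enorm v ^+ 2))))%:E.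
Proof.
move=> v_gt0 t_ge0; set V := enorm v.
have s2_gt0 : (0 < s ^+ 2)%R by rewrite exprn_even_gt0 //= s_neq0.
have sV_gt0 : (0 < s ^+ 2 * V ^+ 2)%R by rewrite mulr_gt0 // exprn_gt0.
(* Chernoff: Markov's inequality for [expR (lam * (dotr v (xi w) - t))], with
   [lam] the minimizer of the resulting exponent. *)
pose lam := (t / (s ^+ 2 * V ^+ 2))%R.
have lam_ge0 : (0 <= lam)%R by rewrite divr_ge0 // ltW.
set A := [set w | _]; have mA : measurable A.
  by apply: measurable_ler_set => //; exact: measurable_dotr.
rewrite -(setIT A) -integral_indic //.
apply: (@le_trans _ _ (\int[P]_w ((expR (- lam * t) * expR (lam * dotr v (xi w)))%:E))).
  apply: ge0_le_integral => //.
  - by apply/measurable_EFinP; exact: measurable_indic.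
  - apply/measurable_EFinP; apply: measurable_funM => //.
    by apply: measurableT_comp => //; apply: measurable_funM => //; exact: measurable_dotr.
  - move=> w _; rewrite lee_fin -expRD indicE.
    case: (boolP (w \in A)) => [/[!inE] tA|_]; last exact: expR_ge0.
    by rewrite -expR0 ler_expR mulNr addrC -mulrBr mulr_ge0 // subr_ge0.
under eq_integral do rewrite EFinM.
rewrite ge0_integralZl_EFin //; last first.
  apply/measurable_EFinP; apply: measurableT_comp => //.
  by apply: measurable_funM => //; exact: measurable_dotr.
rewrite gauss_dotr_mgf -EFinM lee_fin -expRD ler_expR /lam.
rewrite -/V le_eqVlt; apply/orP; left; apply/eqP.
by field; rewrite gt_eqF.
Qed.

Lemma gauss_closer_far_prob (c a b : 'rV[R]_n) (r : R) :
  (0 < r <= enorm (a - c) - enorm (b - c))%R ->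
  P [set w | enorm (c + xi w - a) <= enorm (c + xi w - b)]%R <=
  (expR (- r ^+ 2 / (8 * s ^+ 2)))%:E.
Proof.
move=> /andP[r_gt0]; set A := enorm (a - c); set B := enorm (b - c) => r_le.
have B_ge0 : (0 <= B)%R by exact: enorm_ge0.
have ab_le : (enorm (a - b) <= A + B)%R.
  have -> : (a - b = (a - c) - (b - c))%R by rewrite opprB addrA subrK.
  exact: ler_enormB.
have ab_ge : (A - B <= enorm (a - b))%R.
  have : (A <= enorm (a - b) + enorm (c - b))%R.
    rewrite /A; have -> : (a - c = (a - b) - (c - b))%R by rewrite opprB addrA subrK.
    exact: ler_enormB.
  by rewrite -(enormN (c - b)) opprB -/B => ?; lra.
have ab_gt0 : (0 < enorm (a - b))%R by lra.
pose t := ((A ^+ 2 - B ^+ 2) / 2)%R.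
have t_ge0 : (0 <= t)%R by rewrite /t divr_ge0 // subr_ge0 ler_sqr ?nnegrE //; lra.
apply: (@le_trans _ _ (P [set w | t <= dotr (a - b) (xi w)]%R)).
  apply: le_measure; rewrite ?inE.
  - by apply: measurable_ler_set; exact: measurable_enorm_shift.
  - by apply: measurable_ler_set => //; exact: measurable_dotr.
  - by move=> w; exact: closer_dotr_ge.
apply: (le_trans (gauss_dotr_tail _ _ ab_gt0 t_ge0)); rewrite lee_fin ler_expR !mulNr lerN2.
by apply: ler_far_exponent => //; rewrite ?r_gt0 ?ab_gt0 //=; lra.
Qed.

End gaussian_vector.

Theorem mainTheorem6 (R : realType) (n M : nat)
  (K K' : set 'rV[R]_n) (delta sigma C : R)
  (nu : 'I_M -> 'rV[R]_n) (mu : 'rV[R]_n)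
  (d : measure_display) (T : measurableType d) (P : probability T R)
  (xi : T -> 'rV[R]_n) :
  K' `<=` K ->
  0 < delta -> 0 < sigma -> 2 < C ->
  is_maximal_packing K' delta nu ->
  K' mu ->
  is_std_gaussian_vector P sigma xi ->
  let Y := fun w => mu + xi w in
  let E := [set w | exists istar : 'I_M,
        (forall j, enorm (Y w - nu istar) <= enorm (Y w - nu j)) /\
        (C + 1) * delta < enorm (nu istar - mu)] in
  (P E <= (M%:R * expR (- ((C - 2) ^+ 2 * delta ^+ 2) / (8 * sigma ^+ 2)))%:E)%E.
Proof.
move=> _ delta_gt0 sigma_gt0 C_gt2 [_ maximal] Kmu xi_gauss /=.
set E := [set w | _].
have [i0 near_i0] := maximal mu Kmu.
set b := expR _.
have m_dist i := measurable_enorm_shift xi_gauss mu (nu i).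
pose far i := (C + 1) * delta < enorm (nu i - mu).
pose F i := if far i
  then [set w | enorm (mu + xi w - nu i) <= enorm (mu + xi w - nu i0)] else set0.
have mF i : measurable (F i).
  by rewrite /F; case: ifP => _ //; exact: measurable_ler_set.
have mE : measurable E by exact: measurable_minimizer_set m_dist.
have E_sub : E `<=` \bigcup_i F i.
  by move=> w [i [nearest far_i]]; exists i => //; rewrite /F /far far_i; exact: nearest.
have F_le i : (P (F i) <= b%:E)%E.
  rewrite /F; case: ifP => [far_i|_]; last by rewrite measure0 lee_fin expR_ge0.
  rewrite /b -exprMn; apply: (gauss_closer_far_prob xi_gauss); first by rewrite gt_eqF.
  rewrite -enormN opprB in near_i0; rewrite /far in far_i.
  by rewrite mulr_gt0 ?subr_gt0 //=; nra.
apply: (le_trans (le_measure_fin_cover P mE mF E_sub)).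
apply: le_trans; first by apply: lee_sum => i _; exact: F_le.
rewrite sumEFin lee_fin.
have -> : \sum_(i <- index_enum 'I_M) b = \sum_(i < M) b by [].
by rewrite sumr_const card_ord mulr_natl.
Qed.
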